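(* Let $(\Omega,\Sigma,\mu)$ and $(\Delta,\Gamma,\nu)$ be $\sigma$-finite measure spaces, let $X_1(\mu),X_2(\mu)$ be saturated Banach function spaces over $\mu$ and $Y_1(\nu),Y_2(\nu)$ saturated Banach function spaces over $\nu$, and let $T\colon X_1(\mu)\to Y_1(\nu)$ and $S\colon X_2(\mu)\to Y_2(\nu)$ be nontrivial continuous linear operators. Assume that $Y_2^{Y_1''}$ is saturated and let $h\in X_1^{X_2}$. The following are equivalent: (a) There exists a constant $C>0$ such that $$\sum_{i=1}^n\int T(x_i)y_i'\,d\nu\le C\Big\Vert\sum_{i=1}^nS(hx_i)y_i'\Big\Vert_{Y_2\pi Y_1'}$$ for every $n\in\mathbb{N}$, all $x_1,\dots,x_n\in X_1(\mu)$ and all $y_1',\dots,y_n'\in Y_1(\nu)'$. (b) There exists $\xi^*\in(Y_2\pi Y_1')^*$ such that $\eta(T(x))=R_{\xi^*}(S(hx))$ for all $x\in X_1(\mu)$, where $\eta\colon Y_1(\nu)''\to (Y_1(\nu)')^*$ is given by $\langle\eta(f),y'\rangle=\int fy'\,d\nu$ (and $T(x)\in Y_1(\nu)\subset Y_1(\nu)''$), and $R_{\xi^*}\colon Y_2(\nu)\to (Y_1(\nu)')^*$ is the continuous linear operator defined by $\langle R_{\xi^*}(y_2),y_1'\rangle=\langle\xi^*,y_2y_1'\rangle$ for $y_2\in Y_2(\nu)$, $y_1'\in Y_1(\nu)'$.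
   Context: $L^0(\mu)$ denotes the space of ($\mu$-a.e. classes of) measurable real functions. A Banach function space $X(\mu)$ is a Banach space $X(\mu)\subset L^0(\mu)$ with norm $\Vert\cdot\Vert_X$ such that if $f\in L^0(\mu)$, $g\in X(\mu)$ and $|f|\le|g|$ $\mu$-a.e., then $f\in X(\mu)$ and $\Vert f\Vert_X\le\Vert g\Vert_X$. It is saturated if there is no $A\in\Sigma$ with $\mu(A)>0$ and $f\chi_A=0$ a.e. for all $f\in X(\mu)$. For Banach function spaces $X(\mu),Y(\mu)$, the $Y$-dual is $X^Y=\{h\in L^0(\mu): fh\in Y(\mu)\ \forall f\in X(\mu)\}$ with norm $\Vert h\Vert_{X^Y}=\sup_{f\in B_X}\Vert hf\Vert_Y$; the Köthe dual is $X(\mu)'=X^{L^1(\mu)}$ and the Köthe bidual is $X(\mu)''=(X(\mu)')'$ (a saturated $X(\mu)$ is contained in $X(\mu)''$). The $\pi$-product space $X\pi Y$ consists of all $h\in L^0(\mu)$ with $|h|\le\sum_n|f_ng_n|$ a.e. for some $(f_n)\subset X(\mu)$, $(g_n)\subset Y(\mu)$ with $\sum_n\Vert f_n\Vert_X\Vert g_n\Vert_Y<\infty$, normed by $\pi(h)=\inf\sum_n\Vert f_n\Vert_X\Vert g_n\Vert_Y$ over all such representations; $(Y_2\pi Y_1')^*$ is its topological dual. $B_X$ is the closed unit ball. *)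

From HB Require Import structures.
From mathcomp Require Import all_boot all_order all_algebra.
From mathcomp Require Import all_classical all_reals all_analysis.
Set Implicit Arguments. Unset Strict Implicit. Unset Printing Implicit Defensive.
Import Order.TTheory GRing.Theory Num.Theory.
Import numFieldNormedType.Exports.
Local Open Scope classical_set_scope.
Local Open Scope ring_scope.

(* Functions are handled through representatives; all notions below are
   invariant under mu-a.e. equality (for Banach function spaces this is
   forced by the lattice axiom). *)
Record fspace (R : realType) (T : Type) := FSpace {
  fs_mem : set (T -> R);
  fs_norm : (T -> R) -> \bar R }.

Section defs.
Context {R : realType}.

Section one_space.
Context {d : measure_display} {T : measurableType d}
  (mu : {measure set T -> \bar R}).

Definition is_bfs (X : fspace R T) : Prop :=
  let N := fs_norm X in let M := fs_mem X in
  (forall f, M f -> measurable_fun setT f) /\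
      (forall f, M f -> (0 <= N f)%E /\ (N f < +oo)%E) /\
      (forall f g, M f -> M g -> M (fun x => f x + g x)) /\
      (forall (a : R) f, M f -> M (fun x => a * f x)) /\
      (forall f, M f -> (N f = 0%E <-> {ae mu, forall x, f x = 0})) /\
      (forall (a : R) f, M f -> N (fun x => a * f x) = ((`|a|%R)%:E * N f)%E) /\
      (forall f g, M f -> M g -> (N (fun x => (f x + g x)%R) <= N f + N g)%E) /\
      (forall (f g : T -> R), measurable_fun setT f -> M g ->
         {ae mu, forall x, `|f x| <= `|g x|} -> M f /\ (N f <= N g)%E) /\
      (forall u : nat -> T -> R, (forall n, M (u n)) ->
         (forall e : R, 0 < e -> exists n0, forall m n, (n0 <= m)%N -> (n0 <= n)%N ->
            (N (fun x => (u n x - u m x)%R) < e%:E)%E) ->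
         exists f, M f /\ forall e : R, 0 < e -> exists n0, forall n, (n0 <= n)%N ->
            (N (fun x => (u n x - f x)%R) < e%:E)%E).

Definition saturated (X : fspace R T) : Prop :=
  forall A, measurable A ->
    (forall f, fs_mem X f -> {ae mu, forall x, f x * \1_A x = 0}) -> mu A = 0%E.

Definition L1 : fspace R T :=
  FSpace (fun f => measurable_fun setT f /\ (\int[mu]_x (`|f x|%R)%:E < +oo)%E)
         (fun f => (\int[mu]_x (`|f x|%R)%:E)%E).

Definition ydual (X Y : fspace R T) : fspace R T :=
  FSpace (fun h => measurable_fun setT h /\
                   forall f, fs_mem X f -> fs_mem Y (fun x => h x * f x))
         (fun h => ereal_sup [set fs_norm Y (fun x => h x * f x) | f in
                      [set f | fs_mem X f /\ (fs_norm X f <= 1)%E]]).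

Definition kdual (X : fspace R T) : fspace R T := ydual X L1.

Definition pi_norm (X Y : fspace R T) (h : T -> R) : \bar R :=
  ereal_inf [set (\sum_(0 <= n <oo) (fs_norm X (fg.1 n) * fs_norm Y (fg.2 n)))%E |
     fg in [set fg : (nat -> T -> R) * (nat -> T -> R) |
       (forall n, fs_mem X (fg.1 n)) /\ (forall n, fs_mem Y (fg.2 n)) /\
       {ae mu, forall x, ((`|h x|%R)%:E <=
            \sum_(0 <= n <oo) (`|fg.1 n x * fg.2 n x|%R)%:E)%E}]].

Definition piprod (X Y : fspace R T) : fspace R T :=
  FSpace (fun h => measurable_fun setT h /\ (pi_norm X Y h < +oo)%E)
         (pi_norm X Y).

Definition dual_elem (P : fspace R T) (xi : (T -> R) -> R) : Prop :=
  (forall (a b : R) f g, fs_mem P f -> fs_mem P g ->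
      xi (fun x => a * f x + b * g x) = a * xi f + b * xi g) /\
  exists C : R, forall f, fs_mem P f -> ((`|xi f|%R)%:E <= C%:E * fs_norm P f)%E.

End one_space.

Section operators.
Context {d1 d2 : measure_display} {T1 : measurableType d1}
  {T2 : measurableType d2}
  (mu : {measure set T1 -> \bar R}) (nu : {measure set T2 -> \bar R}).

Definition is_clop (X : fspace R T1) (Y : fspace R T2)
    (Op : (T1 -> R) -> (T2 -> R)) : Prop :=
  [/\ (forall f, fs_mem X f -> fs_mem Y (Op f)),
      (forall f g, fs_mem X f -> fs_mem X g -> {ae mu, forall x, f x = g x} ->
          {ae nu, forall y, Op f y = Op g y}),
      (forall (a b : R) f g, fs_mem X f -> fs_mem X g ->
          {ae nu, forall y, Op (fun x => a * f x + b * g x) y =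
                            a * Op f y + b * Op g y}) &
      exists C : R, forall f, fs_mem X f ->
          (fs_norm Y (Op f) <= C%:E * fs_norm X f)%E].

Definition nontrivial_op (X : fspace R T1) (Op : (T1 -> R) -> (T2 -> R)) : Prop :=
  exists f, fs_mem X f /\ ~ {ae nu, forall y, Op f y = 0}.

End operators.

Section maps.
Context {d : measure_display} {T : measurableType d}
  (nu : {measure set T -> \bar R}).

Definition eta_map (f : T -> R) : (T -> R) -> R :=
  fun y' => Rintegral nu setT (fun x => f x * y' x).

Definition Rxi (xi : (T -> R) -> R) (y2 : T -> R) : (T -> R) -> R :=
  fun y1' => xi (fun x => y2 x * y1' x).

End maps.
End defs.

(* (b) => (a) is a direct estimate: by linearity the left-hand side of (a) is
   xi applied to sum_i S(h x_i) y'_i, which is at most ||xi|| times its pi-norm.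
   For (a) => (b), the pairs (sum_i S(h x_i) y'_i, sum_i int T(x_i) y'_i) form
   the graph of a linear functional on a subspace of Y2 pi Y1', well defined and
   dominated by C pi(.) precisely because of (a).  The Hahn-Banach theorem,
   proved by Zorn's lemma on dominated graphs, extends it to some xi in
   (Y2 pi Y1')^*, and on one-term sums the graph reads eta(T x) = R_xi(S(h x)).
   The terms S(h x) y' have finite pi-norm because Koethe-dual elements have
   finite norm, which rests on the completeness of Y1. *)

From HB Require Import structures.
From mathcomp Require Import all_boot all_order all_algebra.
From mathcomp Require Import all_classical all_reals all_analysis.
From mathcomp Require Import ring lra measurable_realfun.
Import Order.TTheory GRing.Theory Num.Theory.
Import numFieldNormedType.Exports.
Local Open Scope classical_set_scope.
Local Open Scope ring_scope.

Set Implicit Arguments. Unset Strict Implicit. Unset Printing Implicit Defensive.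
Section HahnBanach.
Variables (R : realType) (E : lmodType R) (V : set E) (p : E -> R).
Hypothesis V_comb : forall a b u v, V u -> V v -> V (a *: u + b *: v).
Hypothesis p_subadd : forall u v, V u -> V v -> p (u + v) <= p u + p v.
Hypothesis p_homo : forall t u, 0 < t -> V u -> p (t *: u) = t * p u.

Definition dominated_graph (G : set (E * R)) :=
  [/\ forall ua, G ua -> V ua.1,
      forall a b ua vb, G ua -> G vb ->
        G (a *: ua.1 + b *: vb.1, a * ua.2 + b * vb.2) &
      forall ua, G ua -> ua.2 <= p ua.1].

Lemma sublinear0 u : V u -> p 0 = 0.
Proof.
move=> Vu; have V0 : V 0 by have := V_comb 0 0 Vu Vu; rewrite !scale0r addr0.
by have := p_homo (ltr0Sn _ 1) V0; rewrite scaler0; lra.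
Qed.

Lemma dominated_graphZ G k u a : dominated_graph G -> G (u, a) -> G (k *: u, k * a).
Proof.
by move=> [_ G_comb _] Gua; have := G_comb k 0 _ _ Gua Gua; rewrite scale0r mul0r !addr0.
Qed.

Lemma dominated_graph_fun G u a b : dominated_graph G -> G (u, a) -> G (u, b) -> a = b.
Proof.
move=> [G_V G_comb G_p] Gua Gub; have p0 := sublinear0 (G_V _ Gua).
have := G_p _ (G_comb 1 (-1) _ _ Gua Gub); have := G_p _ (G_comb 1 (-1) _ _ Gub Gua).
by rewrite /= scale1r scaleN1r subrr p0; lra.
Qed.

Lemma dominated_graph_directed (Fam : set (set (E * R))) :
  (forall G, Fam G -> dominated_graph G) ->
  (forall G1 G2, Fam G1 -> Fam G2 -> exists2 G, Fam G & G1 `|` G2 `<=` G) ->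
  dominated_graph (\bigcup_(G in Fam) G).
Proof.
move=> Fam_dom Fam_dir; split.
- by move=> ua [G /Fam_dom[G_V _ _]]; apply: G_V.
- move=> a b ua vb [G1 FG1 G1ua] [G2 FG2 G2vb].
  have [G FG G12] := Fam_dir _ _ FG1 FG2; have [_ G_comb _] := Fam_dom _ FG.
  by exists G => //; apply: G_comb; apply: G12; [left|right].
- by move=> ua [G /Fam_dom[_ _ G_p]]; apply: G_p.
Qed.

Definition adjoin (M : set (E * R)) (f : E) (c : R) : set (E * R) :=
  [set (ua.1 + t *: f, ua.2 + t * c) | ua in M & t in [set: R]].

(* Any value c at f of an extension of M satisfies these bounds; every lower
   bound is below every upper bound by subadditivity of p. *)
Lemma adjoin_constant M f : dominated_graph M -> M !=set0 -> V f ->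
  exists c, forall ua, M ua -> ua.2 - p (ua.1 - f) <= c /\ c <= p (ua.1 + f) - ua.2.
Proof.
move=> [M_V M_comb M_p] [ua0 Mua0] Vf.
have V_sub u : V u -> V (u - f).
  by move=> Vu; have := V_comb 1 (-1) Vu Vf; rewrite scale1r scaleN1r.
have V_add u : V u -> V (u + f).
  by move=> Vu; have := V_comb 1 1 Vu Vf; rewrite !scale1r.
have sep ua vb : M ua -> M vb -> ua.2 - p (ua.1 - f) <= p (vb.1 + f) - vb.2.
  move=> Mua Mvb; have := M_p _ (M_comb 1 1 _ _ Mua Mvb) => /=.
  rewrite !scale1r !mul1r (_ : ua.1 + vb.1 = (ua.1 - f) + (vb.1 + f)); last first.
    by rewrite addrACA addNr addr0.
  have := p_subadd (V_sub _ (M_V _ Mua)) (V_add _ (M_V _ Mvb)); lra.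
pose L := [set ua.2 - p (ua.1 - f) | ua in M].
have L_ub : has_ubound L by exists (p (ua0.1 + f) - ua0.2) => _ [ua Mua <-]; exact: sep.
exists (sup L) => ua Mua; split; first by apply: ub_le_sup => //; exists ua.
by apply: ge_sup => [|_ [vb Mvb <-]]; [exists (ua0.2 - p (ua0.1 - f)), ua0|exact: sep].
Qed.

Lemma dominated_graph_adjoin M f c : dominated_graph M -> V f ->
  (forall ua, M ua -> ua.2 - p (ua.1 - f) <= c /\ c <= p (ua.1 + f) - ua.2) ->
  dominated_graph (adjoin M f c).
Proof.
move=> domM Vf c_bounds; have [M_V M_comb M_p] := domM.
have V_adj u t : V u -> V (u + t *: f) by move=> Vu; have := V_comb 1 t Vu Vf; rewrite scale1r.
split.
- by move=> _ [ua Mua [t _ <-]]; apply: V_adj; exact: M_V.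
- move=> a b _ _ [ua Mua [t _ <-]] [vb Mvb [s _ <-]] /=.
  exists (a *: ua.1 + b *: vb.1, a * ua.2 + b * vb.2); first exact: M_comb.
  exists (a * t + b * s) => //=; congr pair; last by ring.
  by rewrite !scalerDr !scalerA scalerDl addrACA.
- move=> _ [[u a] Mua [t _ <-]] /=.
  have [t_gt0|t_lt0|->] := ltrgt0P t; last first.
  + by rewrite scale0r mul0r !addr0; exact: M_p _ Mua.
  + pose s := - t; have s_gt0 : 0 < s by rewrite oppr_gt0.
    have Mus := dominated_graphZ (s^-1) domM Mua.
    have [cs _] := c_bounds _ Mus; move: cs => /=.
    have -> : u + t *: f = s *: (s^-1 *: u - f).
      by rewrite scalerBr scalerA mulfV ?gt_eqF // scale1r /s scaleNr opprK.
    rewrite p_homo //; last by have := V_comb s^-1 (-1) (M_V _ Mua) Vf; rewrite scaleN1r.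
    rewrite -(ler_pM2l s_gt0) mulrBr mulrA mulfV ?gt_eqF // mul1r /s; lra.
  + have Mut := dominated_graphZ (t^-1) domM Mua.
    have [_ ct] := c_bounds _ Mut; move: ct => /=.
    have -> : u + t *: f = t *: (t^-1 *: u + f).
      by rewrite scalerDr scalerA mulfV ?gt_eqF // scale1r.
    rewrite p_homo //; last by have := V_comb t^-1 1 (M_V _ Mua) Vf; rewrite scale1r.
    rewrite -(ler_pM2l t_gt0) mulrBr mulrA mulfV ?gt_eqF // mul1r; lra.
Qed.

Lemma sub_adjoin M f c : M `<=` adjoin M f c.
Proof. by move=> [u a] Mua; exists (u, a) => //; exists 0; rewrite // scale0r mul0r !addr0. Qed.

Lemma adjoin_point M f c : dominated_graph M -> M !=set0 -> adjoin M f c (f, c).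
Proof.
move=> domM [[u a] Mua]; exists (0 *: u, 0 * a); first exact: dominated_graphZ.
by exists 1; rewrite // scale0r mul0r !add0r scale1r mul1r.
Qed.

Lemma dominated_graph_chain G0 (Fam : set (set (E * R))) : dominated_graph G0 ->
  (forall A, Fam A -> dominated_graph (A `|` G0)) -> total_on Fam subset ->
  dominated_graph (\bigcup_(A in Fam) A `|` G0).
Proof.
move=> domG0 Fam_dom Fam_tot.
pose Fam' := [set B | B = G0 \/ exists2 A, Fam A & B = A `|` G0].
have -> : \bigcup_(A in Fam) A `|` G0 = \bigcup_(B in Fam') B.
  apply/seteqP; split => [ua [[A FA Aua]|G0ua]|ua [B [->|[A FA ->]] Bua]].
  - by exists (A `|` G0); [right; exists A|left].
  - by exists G0; [left|].
  - by right.
  - by case: Bua => [Aua|]; [left; exists A|right].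
apply: dominated_graph_directed => [B [->//|[A /Fam_dom domA ->//]]|B1 B2].
move=> [->|[A1 FA1 ->]] [->|[A2 FA2 ->]].
- by exists G0; [left|move=> ua []].
- by exists (A2 `|` G0); [right; exists A2|move=> ua [|]//; right].
- by exists (A1 `|` G0); [right; exists A1|move=> ua [//|]; right].
- have [A12|A21] := Fam_tot _ _ FA1 FA2.
  + by exists (A2 `|` G0); [right; exists A2|move=> ua [[/A12|]|[|]]; by [left|right]].
  + by exists (A1 `|` G0); [right; exists A1|move=> ua [[|]|[/A21|]]; by [left|right]].
Qed.

Theorem hahn_banach G0 : dominated_graph G0 -> G0 !=set0 ->
  exists xi : E -> R,
    [/\ forall a b u v, V u -> V v -> xi (a *: u + b *: v) = a * xi u + b * xi v,
        forall u, V u -> xi u <= p u &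
        forall ua, G0 ua -> xi ua.1 = ua.2].
Proof.
move=> domG0 G0_n0.
(* Zorn's lemma is applied to the A with A `|` G0 dominated, rather than to the
   dominated graphs containing G0, because the empty chain must be admissible. *)
pose P A := dominated_graph (A `|` G0).
have [A [PA A_max]] := @Zorn_bigcup _ P (fun Fam FamP => dominated_graph_chain domG0 FamP).
set M := A `|` G0 in PA.
have domM : dominated_graph M := PA.
have [M_V M_comb M_p] := domM.
have M_n0 : M !=set0 by have [ua G0ua] := G0_n0; exists ua; right.
have M_total u : V u -> exists a, M (u, a).
  move=> Vu; apply: contrapT => M_u.
  have [c c_bounds] := adjoin_constant domM M_n0 Vu.
  apply: (A_max (adjoin M u c)); last first.
    rewrite /P; have -> : adjoin M u c `|` G0 = adjoin M u c.
      by apply/setUidPl => ua G0ua; apply: sub_adjoin; right.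
    exact: dominated_graph_adjoin.
  split; first by move=> ua Aua; apply: sub_adjoin; left.
  by move=> adjA; apply: M_u; exists c; left; apply: adjA; exact: adjoin_point.
have /choice[xi xiM] : forall u, exists a, V u -> M (u, a).
  by move=> u; have [/M_total[a Ma]|] := pselect (V u); [exists a|exists 0].
exists xi; split.
- move=> a b u v Vu Vv; apply: (dominated_graph_fun domM (xiM _ (V_comb a b Vu Vv))).
  exact: M_comb (xiM _ Vu) (xiM _ Vv).
- by move=> u Vu; exact: M_p _ (xiM _ Vu).
- move=> [u a] G0ua /=; have Mua : M (u, a) by right.
  exact: dominated_graph_fun domM (xiM _ (M_V _ Mua)) Mua.
Qed.
End HahnBanach.

Lemma exists_half_expr_lt (R : archiRealFieldType) (e : R) : 0 < e ->
  exists n, 2 * 2^-1 ^+ n < e.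
Proof.
move=> e_gt0; pose n := Num.bound (2 / e); exists n.
have n_gt : 2 / e < n%:R by apply: archi_boundP; rewrite divr_ge0 // ltW.
have n_lt : (n%:R : R) < 2 ^+ n by rewrite -natrX ltr_nat ltn_expl.
rewrite exprVn -[_ * _]/(2 / 2 ^+ n) ltr_pdivrMr ?exprn_gt0 // mulrC -ltr_pdivrMr //.
exact: lt_trans n_gt n_lt.
Qed.

Lemma ae_le_integral_abs_mul (R : realType) (d : measure_display) (T : measurableType d)
    (mu : {measure set T -> \bar R}) (y f g : T -> R) :
  measurable_fun setT y -> measurable_fun setT f -> measurable_fun setT g ->
  {ae mu, forall x, `|g x| <= `|f x|} ->
  (\int[mu]_x (`|y x * g x|)%:E <= \int[mu]_x (`|y x * f x|)%:E)%E.
Proof.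
move=> my mf mg g_f; apply: ae_ge0_le_integral => //.
- by apply/measurable_EFinP; apply: measurableT_comp => //; exact: measurable_funM.
- by apply/measurable_EFinP; apply: measurableT_comp => //; exact: measurable_funM.
- by apply: filterS g_f => x gx _; rewrite lee_fin !normrM ler_wpM2l.
Qed.

Section bfs.
Context {R : realType} {d : measure_display} {T : measurableType d}
  (mu : {measure set T -> \bar R}).
Variable Y : fspace R T.
Hypothesis bY : is_bfs mu Y.
Local Notation M := (fs_mem Y).
Local Notation N := (fs_norm Y).

Lemma bfs_measurable f : M f -> measurable_fun setT f. Proof. exact: bY.1. Qed.
Lemma bfs_norm_ge0 f : M f -> (0 <= N f)%E. Proof. by move=> /(bY.2.1 f) []. Qed.
Lemma bfs_norm_lty f : M f -> (N f < +oo)%E. Proof. by move=> /(bY.2.1 f) []. Qed.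
Lemma bfs_add f g : M f -> M g -> M (fun x => f x + g x). Proof. exact: bY.2.2.1. Qed.
Lemma bfs_scale (a : R) f : M f -> M (fun x => a * f x). Proof. exact: bY.2.2.2.1. Qed.
Lemma bfs_norm_eq0 f : M f -> (N f = 0%E <-> {ae mu, forall x, f x = 0}).
Proof. exact: bY.2.2.2.2.1. Qed.
Lemma bfs_normZ (a : R) f : M f -> N (fun x => a * f x) = ((`|a|%R)%:E * N f)%E.
Proof. exact: bY.2.2.2.2.2.1. Qed.
Lemma bfs_normD f g : M f -> M g -> (N (fun x => (f x + g x)%R) <= N f + N g)%E.
Proof. exact: bY.2.2.2.2.2.2.1. Qed.
Lemma bfs_ideal (f g : T -> R) : measurable_fun setT f -> M g ->
  {ae mu, forall x, `|f x| <= `|g x|} -> M f /\ (N f <= N g)%E.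
Proof. exact: bY.2.2.2.2.2.2.2.1. Qed.
Lemma bfs_complete (u : nat -> T -> R) : (forall n, M (u n)) ->
   (forall e : R, 0 < e -> exists n0, forall m n, (n0 <= m)%N -> (n0 <= n)%N ->
      (N (fun x => (u n x - u m x)%R) < e%:E)%E) ->
   exists f, M f /\ forall e : R, 0 < e -> exists n0, forall n, (n0 <= n)%N ->
      (N (fun x => (u n x - f x)%R) < e%:E)%E.
Proof. exact: bY.2.2.2.2.2.2.2.2. Qed.

Lemma bfs_sub f g : M f -> M g -> M (fun x => f x - g x).
Proof.
move=> Mf Mg; have := bfs_add Mf (bfs_scale (-1) Mg).
by under eq_fun do rewrite mulN1r.
Qed.

Lemma bfs_abs f : M f -> M (fun x => `|f x|) /\ (N (fun x => `|f x|%R) <= N f)%E.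
Proof.
move=> Mf; apply: bfs_ideal => //; last by apply: nearW => x; rewrite normr_id.
exact: measurableT_comp (bfs_measurable Mf).
Qed.

Hypothesis Y_n0 : exists g, M g.

Lemma bfs0 : M (fun _ => 0) /\ N (fun _ => 0) = 0%E.
Proof.
have [g Mg] := Y_n0.
have <- : (fun x => 0 * g x) = (fun _ => 0 : R) by apply/funext => x; rewrite mul0r.
by rewrite bfs_normZ // normr0 mul0e; split => //; exact: bfs_scale.
Qed.

Lemma bfs_le_limit_ae (u : nat -> T -> R) f g k : M f -> M g ->
  (forall n, M (u n)) ->
  (forall e : R, 0 < e -> exists n0, forall n, (n0 <= n)%N ->
     (N (fun x => (u n x - f x)%R) < e%:E)%E) ->
  (forall n x, (k < n)%N -> g x <= u n x) ->
  {ae mu, forall x, g x <= f x}.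
Proof.
move=> Mf Mg Mu u_f g_u.
pose v := (g \- f) \max cst 0.
have mv : measurable_fun setT v.
  exact: measurable_maxr (measurable_funB (bfs_measurable Mg) (bfs_measurable Mf))
    (measurable_cst _).
have v_le n : (k < n)%N -> {ae mu, forall x, `|v x| <= `|u n x - f x|}.
  move=> kn; apply: nearW => x; rewrite ger0_norm ?le_max ?lexx ?orbT //.
  rewrite ge_max normr_ge0 andbT; apply: le_trans (ler_norm _).
  by rewrite lerD2r g_u.
have [Mv _] := bfs_ideal mv (bfs_sub (Mu k.+1) Mf) (v_le _ (ltnSn k)).
have Nv0 : N v = 0%E.
  apply/eqP; rewrite eq_le bfs_norm_ge0 // andbT; apply/lee_addgt0Pr => e e0.
  have [n0 n0_f] := u_f e e0; pose n := maxn n0 k.+1.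
  have [_ Nv_le] := bfs_ideal mv (bfs_sub (Mu n) Mf) (v_le _ (leq_maxr n0 k.+1)).
  by rewrite add0e; apply: le_trans Nv_le (ltW (n0_f n (leq_maxl _ _))).
apply: filterS ((bfs_norm_eq0 Mv).1 Nv0) => x vx0.
by rewrite -subr_le0 -vx0 /v /= le_max lexx.
Qed.

Lemma bfs_geometric_sum (g : nat -> T -> R) :
  (forall k, M (g k)) -> (forall k x, 0 <= g k x) ->
  (forall k, (N (g k) <= (2^-1 ^+ k)%:E)%E) ->
  exists f, M f /\ forall k, {ae mu, forall x, g k x <= f x}.
Proof.
move=> Mg g_ge0 Ng; pose w k : R := 2^-1 ^+ k.
pose u m x := \sum_(0 <= k < m) g k x.
have Mu m : M (u m).
  elim: m => [|m IH]; first by rewrite /u; under eq_fun do rewrite big_geq //; exact: bfs0.1.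
  by rewrite /u; under eq_fun do rewrite big_nat_recr //=; exact: bfs_add.
have u_tail m j : (N (fun x => (u (m + j)%N x - u m x)%R) <= (2 * (w m - w (m + j)%N))%:E)%E.
  elim: j => [|j IH].
    by rewrite addn0 subrr mulr0; under eq_fun do rewrite subrr; rewrite bfs0.2.
  have -> : (fun x => u (m + j.+1)%N x - u m x) =
             (fun x => (u (m + j)%N x - u m x) + g (m + j)%N x).
    by apply/funext => x; rewrite /u addnS big_nat_recr //= addrAC.
  apply: le_trans (bfs_normD (bfs_sub (Mu _) (Mu _)) (Mg _)) _.
  apply: le_trans (leeD IH (Ng _)) _; rewrite -EFinD lee_fin /w addnS exprS; lra.
have u_cauchy e : 0 < e -> exists n0, forall m n, (n0 <= m)%N -> (n0 <= n)%N ->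
    (N (fun x => (u n x - u m x)%R) < e%:E)%E.
  move=> /exists_half_expr_lt[n0 n0_e]; exists n0 => m n.
  wlog mn : m n / (m <= n)%N => [wlog_mn m_n0 n_n0|m_n0 _].
    have [/wlog_mn|/ltnW/wlog_mn nm] := leqP m n; first exact.
    have -> : (fun x => u n x - u m x) = (fun x => -1 * (u m x - u n x)).
      by apply/funext => x; rewrite mulN1r opprB.
    by rewrite bfs_normZ ?normrN1 ?mul1e; [exact: nm|exact: bfs_sub].
  rewrite -(subnKC mn); apply: le_lt_trans (u_tail m (n - m)%N) _; rewrite lte_fin.
  have w_ge0 k : 0 <= w k by rewrite exprn_ge0.
  have w_le : w m <= w n0 by apply: ler_wiXn2l => //; lra.
  by have := w_ge0 (m + (n - m))%N; rewrite /w in w_le *; lra.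
have [f [Mf u_f]] := bfs_complete Mu u_cauchy.
exists f; split => // k; apply: (bfs_le_limit_ae (k := k)) Mf (Mg k) Mu u_f _ => n x kn.
by rewrite /u big_mkord (bigD1 (Ordinal kn)) //= lerDl sumr_ge0.
Qed.

Local Notation K := (kdual mu Y).

Lemma kdual0 : fs_mem K (fun _ => 0).
Proof.
split=> [|f Yf]; first exact: measurable_cst.
under eq_fun do rewrite mul0r; split; first exact: measurable_cst.
by rewrite /=; under eq_integral do rewrite normr0; rewrite integral0 ltry.
Qed.

Lemma kdualZ (c : R) y' : fs_mem K y' -> fs_mem K (fun x => c * y' x).
Proof.
move=> [my' y'_int]; split=> [|f Yf]; first exact: measurable_funM.
have [myf yf_int] := y'_int f Yf; under eq_fun do rewrite -mulrA.
split; first exact: measurable_funM.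
rewrite /=; under eq_integral do rewrite normrM EFinM.
rewrite ge0_integralZl_EFin //; first by apply: lte_mul_pinfty; rewrite ?lee_fin.
by apply/measurable_EFinP; exact: measurableT_comp.
Qed.

Lemma kdual_norm_ge0 y' : (0 <= fs_norm K y')%E.
Proof.
apply: ereal_sup_ubound; exists (fun _ => 0).
  by rewrite /= bfs0.2 lee_fin; split; [exact: bfs0.1|].
by rewrite /=; under eq_integral do rewrite mulr0 normr0; exact: integral0.
Qed.

(* Otherwise pick f_k in the unit ball of Y with int |y' f_k| > 2^k (k + 1);
   the series of the 2^-k |f_k| converges in Y to some f dominating every term,
   so that int |y' f| would be infinite. *)
Lemma kdual_norm_lty y' : fs_mem K y' -> (fs_norm K y' < +oo)%E.
Proof.
move=> [my' y'_int]; rewrite ltey; apply/negP => /eqP y'_oo.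
have /choice[fk fkP] k : exists f, [/\ M f, (N f <= 1)%E &
    ((2 ^+ k * k.+1%:R)%:E < \int[mu]_x (`|y' x * f x|)%:E)%E].
  have : ((2 ^+ k * k.+1%:R)%:E < fs_norm K y')%E by rewrite y'_oo ltey.
  by move=> /ereal_sup_gt[_ [f [Mf Nf] <-] lt]; exists f.
pose g k x := 2^-1 ^+ k * `|fk k x|.
have mfk k : measurable_fun setT (fk k) by have [/bfs_measurable] := fkP k.
have Mg k : M (g k) /\ (N (g k) <= (2^-1 ^+ k)%:E)%E.
  have [Mf Nf _] := fkP k; have [Ma Na] := bfs_abs Mf.
  split; first exact: bfs_scale.
  rewrite bfs_normZ // ger0_norm ?exprn_ge0 // -[leRHS]mule1.
  by apply: lee_wpmul2l (le_trans Na Nf); rewrite lee_fin exprn_ge0.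
have g_ge0 k x : 0 <= g k x by rewrite mulr_ge0 ?exprn_ge0.
have [f [Mf g_f]] := bfs_geometric_sum (fun k => (Mg k).1) g_ge0 (fun k => (Mg k).2).
have int_g k : ((k.+1%:R)%:E < \int[mu]_x (`|y' x * g k x|)%:E)%E.
  have [_ _ lt] := fkP k.
  rewrite (_ : (fun x => _) = fun x => ((2^-1 ^+ k)%:E * (`|y' x * fk k x|)%:E)%E); last first.
    apply/funext => x; rewrite /g -EFinM !normrM normr_id.
    by rewrite [`|2^-1 ^+ k|]ger0_norm ?exprn_ge0 // mulrCA.
  rewrite ge0_integralZl_EFin ?exprn_ge0 //; last first.
    by apply/measurable_EFinP; apply: measurableT_comp => //; exact: measurable_funM.
  by rewrite exprVn lte_pdivlMl ?exprn_gt0 // -EFinM.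
have int_f k : ((k.+1%:R)%:E < \int[mu]_x (`|y' x * f x|)%:E)%E.
  apply: lt_le_trans (int_g k) (ae_le_integral_abs_mul _ _ _ _) => //.
  - exact: bfs_measurable.
  - exact: bfs_measurable (Mg k).1.
  - by apply: filterS (g_f k) => x gf; rewrite ger0_norm // (le_trans gf (ler_norm _)).
have [_ int_f_lty] := y'_int f Mf.
pose I := (\int[mu]_x (`|y' x * f x|)%:E)%E.
have I_ge0 : (0 <= I)%E by apply: integral_ge0 => x _; rewrite lee_fin.
have I_fin : I \is a fin_num by rewrite ge0_fin_numE.
have := int_f (Num.bound (fine I)); rewrite -/I -(fineK I_fin) lte_fin mulrS.
by have := archi_boundP (fine_ge0 I_ge0); lra.
Qed.

End bfs.

Definition interleave (X : Type) (s t : nat -> X) (n : nat) : X :=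
  if odd n then t n./2 else s n./2.

Lemma interleave_double (X : Type) (s t : nat -> X) n : interleave s t n.*2 = s n.
Proof. by rewrite /interleave odd_double doubleK. Qed.

Lemma interleave_doubleS (X : Type) (s t : nat -> X) n : interleave s t n.*2.+1 = t n.
Proof. by rewrite /interleave /= odd_double /= uphalf_double. Qed.

Lemma nneseries_interleave (R : realType) (a b : nat -> \bar R) :
  (forall n, 0 <= a n)%E -> (forall n, 0 <= b n)%E ->
  (\sum_(0 <= k <oo) interleave a b k = \sum_(0 <= k <oo) a k + \sum_(0 <= k <oo) b k)%E.
Proof.
move=> a_ge0 b_ge0; set u := interleave a b.
have u_ge0 n : (0 <= u n)%E by rewrite /u /interleave; case: ifP.
have u_part N : (\sum_(0 <= k < N.*2) u k = \sum_(0 <= k < N) a k + \sum_(0 <= k < N) b k)%E.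
  elim: N => [|N IH]; first by rewrite !big_geq // adde0.
  rewrite doubleS !big_nat_recr //= IH /u interleave_double interleave_doubleS.
  by rewrite -!addeA; congr (_ + _)%E; rewrite addeCA.
apply/eqP; rewrite eq_le; apply/andP; split.
  apply: lime_le; first exact: is_cvg_nneseries.
  apply: nearW => M; apply: (@le_trans _ _ (\sum_(0 <= k < M.*2) u k)%E).
    apply: ereal_nondecreasing_series => [n _ _|]; first exact: u_ge0.
    by rewrite -addnn leq_addr.
  by rewrite u_part; apply: leeD; apply: nneseries_lim_ge.
rewrite -nneseriesD //.
apply: lime_le; first by apply: is_cvg_nneseries => n _ _; exact: adde_ge0.
apply: nearW => N; rewrite big_split /= -u_part.
by apply: nneseries_lim_ge => n _ _; exact: u_ge0.
Qed.

Section pi_norm.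
Context {R : realType} {d : measure_display} {T : measurableType d}
  (mu : {measure set T -> \bar R}).
Variables (A B : fspace R T).
Hypotheses (bA : is_bfs mu A) (A_n0 : exists f, fs_mem A f).
Hypothesis B_norm_ge0 : forall g, fs_mem B g -> (0 <= fs_norm B g)%E.
Hypothesis B_n0 : exists g, fs_mem B g.

Let A_norm_ge0 f : fs_mem A f -> (0 <= fs_norm A f)%E := bfs_norm_ge0 bA (f := f).
Let A0 := bfs0 bA A_n0.

Definition pi_reps (h : T -> R) :=
  [set fg : (nat -> T -> R) * (nat -> T -> R) |
       (forall n, fs_mem A (fg.1 n)) /\ (forall n, fs_mem B (fg.2 n)) /\
       {ae mu, forall x, ((`|h x|%R)%:E <=
            \sum_(0 <= n <oo) (`|fg.1 n x * fg.2 n x|%R)%:E)%E}].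

Definition pi_rep_sum (fg : (nat -> T -> R) * (nat -> T -> R)) :=
  (\sum_(0 <= n <oo) (fs_norm A (fg.1 n) * fs_norm B (fg.2 n)))%E.

Local Notation pin := (pi_norm mu A B).

Lemma pi_rep_sum_ge0 h fg : pi_reps h fg -> (0 <= pi_rep_sum fg)%E.
Proof.
move=> [Afg [Bfg _]]; apply: nneseries_ge0 => n _ _.
by apply: mule_ge0; [exact: A_norm_ge0|exact: B_norm_ge0].
Qed.

Lemma pi_norm_ge0 h : (0 <= pin h)%E.
Proof. by apply: le_ereal_inf_tmp => _ [fg Hfg <-]; exact: pi_rep_sum_ge0 Hfg. Qed.

Lemma pi_norm_le_rep h fg : pi_reps h fg -> (pin h <= pi_rep_sum fg)%E.
Proof. by move=> Hfg; apply: ereal_inf_lbound; exists fg. Qed.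

Lemma pi_norm_le_ae h1 h2 : {ae mu, forall x, `|h1 x| <= `|h2 x|} -> (pin h1 <= pin h2)%E.
Proof.
move=> h12; apply: le_ereal_inf_tmp => _ [fg [Afg [Bfg fg_h2]] <-].
apply: pi_norm_le_rep; split => //; split => //.
by apply: filterS2 h12 fg_h2 => x h12x; apply: le_trans; rewrite lee_fin.
Qed.

Lemma pi_norm0 : pin (fun _ => 0) = 0%E.
Proof.
apply/eqP; rewrite eq_le pi_norm_ge0 andbT; have [g Bg] := B_n0.
apply: (@le_trans _ _ (pi_rep_sum (fun _ _ => 0, fun _ => g))).
  apply: pi_norm_le_rep; split; first by move=> n; exact: A0.1.
  split => //; apply: nearW => x /=; rewrite normr0.
  by apply: nneseries_ge0 => n _ _; rewrite lee_fin.
by rewrite /pi_rep_sum /= A0.2 eseries0 // => i _ _; rewrite mul0e.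
Qed.

Lemma pi_norm_mul_le f g : fs_mem A f -> fs_mem B g ->
  (pin (fun x => (f x * g x)%R) <= fs_norm A f * fs_norm B g)%E.
Proof.
move=> Af Bg.
pose fg := (fun n : nat => if n == 0%N then f else (fun _ : T => 0), fun _ : nat => g).
apply: (@le_trans _ _ (pi_rep_sum fg)).
  apply: pi_norm_le_rep; split; first by move=> [|n] //=; exact: A0.1.
  split => //; apply: nearW => x.
  by apply: le_trans (nneseries_lim_ge 1 _) => //; rewrite big_nat1.
rewrite /pi_rep_sum (nneseries_split 0 1); last first.
  move=> k _; rewrite /fg /=; apply: mule_ge0; last exact: B_norm_ge0.
  by case: (k == 0%N); [exact: A_norm_ge0|exact: A_norm_ge0 _ A0.1].
rewrite add0n big_nat1 /= eseries0 ?adde0 // => -[//|i] _ _.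
by rewrite /= A0.2 mul0e.
Qed.

Lemma pi_normZ_le (a : R) h : (pin (fun x => (a * h x)%R) <= (`|a|)%:E * pin h)%E.
Proof.
have [->|a_neq0] := eqVneq a 0.
  rewrite normr0 mul0e -pi_norm0; apply: pi_norm_le_ae; apply: nearW => x.
  by rewrite mul0r.
rewrite -lee_pdivrMl ?normr_gt0 //.
apply: le_ereal_inf_tmp => _ [fg [Afg [Bfg fg_h]] <-]; rewrite lee_pdivrMl ?normr_gt0 //.
pose fg' := (fun n x => a * fg.1 n x, fg.2).
apply: (@le_trans _ _ (pi_rep_sum fg')); last first.
  rewrite /pi_rep_sum -nneseriesZl; last first.
    by move=> i _; apply: mule_ge0; [exact: A_norm_ge0|exact: B_norm_ge0].
  apply: lee_nneseries => [i _ _|n _]; rewrite /fg' /=.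
    by apply: mule_ge0; [exact: A_norm_ge0 (bfs_scale bA a (Afg i))|exact: B_norm_ge0].
  by rewrite /= (bfs_normZ bA a (Afg n)) muleA.
apply: pi_norm_le_rep; split; first by move=> n; exact: (bfs_scale bA a (Afg n)).
split => //; apply: filterS fg_h => x hx /=.
rewrite normrM EFinM.
under eq_eseriesr do rewrite -mulrA normrM EFinM.
by rewrite nneseriesZl //; apply: lee_wpmul2l => //; rewrite lee_fin.
Qed.

Definition pi_rep_interleave (fg1 fg2 : (nat -> T -> R) * (nat -> T -> R)) :=
  (interleave fg1.1 fg2.1, interleave fg1.2 fg2.2).

Lemma pi_reps_interleave h1 h2 fg1 fg2 : pi_reps h1 fg1 -> pi_reps h2 fg2 ->
  pi_reps (fun x => h1 x + h2 x) (pi_rep_interleave fg1 fg2) /\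
  pi_rep_sum (pi_rep_interleave fg1 fg2) = (pi_rep_sum fg1 + pi_rep_sum fg2)%E.
Proof.
move=> [Afg1 [Bfg1 fg1_h1]] [Afg2 [Bfg2 fg2_h2]].
have interleaveP (P : (T -> R) -> Prop) (s t : nat -> T -> R) :
    (forall n, P (s n)) -> (forall n, P (t n)) -> forall n, P (interleave s t n).
  by move=> Ps Pt n; rewrite /interleave; case: ifP.
split; last first.
  rewrite /pi_rep_sum -nneseries_interleave;
    try by move=> n; apply: mule_ge0; [exact: A_norm_ge0|exact: B_norm_ge0].
  by apply: eq_eseriesr => n _; rewrite /pi_rep_interleave /=; unfold interleave; case: ifP.
split; first exact: interleaveP.
split; first exact: interleaveP.
apply: filterS2 fg1_h1 fg2_h2 => x hx1 hx2.
set s1 := fun n => (`|fg1.1 n x * fg1.2 n x|)%:E; set s2 := fun n => (`|fg2.1 n x * fg2.2 n x|)%:E.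
rewrite (eq_eseriesr (fun n _ => _ : _ = interleave s1 s2 n)); last first.
  by move=> n _; rewrite /pi_rep_interleave /=; unfold interleave; case: ifP.
rewrite nneseries_interleave; try by move=> n; rewrite lee_fin.
by apply: le_trans (leeD hx1 hx2); rewrite -EFinD lee_fin ler_normD.
Qed.

Lemma pi_normD_le h1 h2 : (pin (fun x => (h1 x + h2 x)%R) <= pin h1 + pin h2)%E.
Proof.
have [->|h1_fin] := eqVneq (pin h1) +oo%E.
  by rewrite addye ?leey // gt_eqF // (lt_le_trans _ (pi_norm_ge0 h2)).
have [->|h2_fin] := eqVneq (pin h2) +oo%E.
  by rewrite addey ?leey // gt_eqF // (lt_le_trans _ (pi_norm_ge0 h1)).
apply/lee_addgt0Pr => e e_gt0; have e2_gt0 : 0 < e / 2 by rewrite divr_gt0.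
have near_inf h : pin h != +oo%E -> exists2 fg, pi_reps h fg &
    (pi_rep_sum fg < pin h + (e / 2)%:E)%E.
  move=> h_fin; have h_fin' : pin h \is a fin_num.
    by rewrite ge0_fin_numE ?pi_norm_ge0 // lt_neqAle h_fin leey.
  have /ereal_inf_lt[_ [fg fg_h <-] lt] : (pin h < pin h + (e / 2)%:E)%E.
    by rewrite lteDl // lte_fin.
  by exists fg.
have [fg1 fg1_h1 lt1] := near_inf _ h1_fin; have [fg2 fg2_h2 lt2] := near_inf _ h2_fin.
have [fg_h fg_sum] := pi_reps_interleave fg1_h1 fg2_h2.
apply: le_trans (pi_norm_le_rep fg_h) _; rewrite fg_sum.
apply: le_trans (leeD (ltW lt1) (ltW lt2)) _.
by rewrite addeACA -EFinD; apply: leeD => //; rewrite lee_fin; lra.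
Qed.

Lemma pi_normZ (a : R) h : a != 0 -> pin (fun x => (a * h x)%R) = (`|a|%:E * pin h)%E.
Proof.
move=> a_neq0; apply/eqP; rewrite eq_le pi_normZ_le /=.
have := pi_normZ_le a^-1 (fun x => a * h x).
under eq_fun do rewrite mulrA mulVf // mul1r.
by rewrite normfV lee_pdivlMl ?normr_gt0.
Qed.

Local Notation P := (fs_mem (piprod mu A B)).

Lemma piprod_norm_fin h : P h -> pin h \is a fin_num.
Proof. by move=> [_ h_lty]; rewrite ge0_fin_numE // pi_norm_ge0. Qed.

Lemma piprod0 : P (fun _ => 0).
Proof. by split; [exact: measurable_cst|rewrite pi_norm0 ltry]. Qed.

Lemma piprod_comb (a b : R) f g : P f -> P g -> P (fun x => a * f x + b * g x).
Proof.
move=> [mf f_lty] [mg g_lty]; split.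
  by apply: measurable_funD; apply: measurable_funM => //; exact: measurable_cst.
apply: le_lt_trans (pi_normD_le (fun x => a * f x) (fun x => b * g x)) _.
by apply: lte_add_pinfty; apply: le_lt_trans (pi_normZ_le _ _) _;
  apply: lte_mul_pinfty; rewrite ?lee_fin.
Qed.

End pi_norm.

Section finite_families.
Variables (R : pzRingType) (D : Type) (V : set (D -> R)).
Hypothesis V0 : V (fun _ => 0).
Hypothesis V_comb : forall a b f g, V f -> V g -> V (fun x => a * f x + b * g x).

Lemma closed_fun_sum n (F : 'I_n -> D -> R) :
  (forall i, V (F i)) -> V (fun x => \sum_(i < n) F i x).
Proof.
elim: n F => [|n IH] F VF; first by under eq_fun do rewrite big_ord0.
under eq_fun do rewrite big_ord_recr /= -[X in X + _]mul1r -[X in _ + X]mul1r.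
by apply: V_comb => //; apply: IH.
Qed.

Lemma linear_fun_sum (xi : (D -> R) -> R) :
  (forall a b f g, V f -> V g -> xi (fun x => a * f x + b * g x) = a * xi f + b * xi g) ->
  forall n (F : 'I_n -> D -> R), (forall i, V (F i)) ->
    xi (fun x => \sum_(i < n) F i x) = \sum_(i < n) xi (F i).
Proof.
move=> xi_lin; elim=> [|n IH] F VF.
  have := xi_lin 0 0 _ _ V0 V0; rewrite !mul0r addr0 => xi0; rewrite [RHS]big_ord0.
  by under eq_fun do rewrite big_ord0.
under eq_fun do rewrite big_ord_recr /= -[X in X + _]mul1r -[X in _ + X]mul1r.
rewrite xi_lin ?mul1r ?IH ?big_ord_recr //; exact: closed_fun_sum.
Qed.

End finite_families.

Definition ord_cat (X : Type) n m (u : 'I_n -> X) (v : 'I_m -> X) (k : 'I_(n + m)) : X :=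
  match fintype.split k with inl i => u i | inr j => v j end.

Lemma ord_cat_lshift (X : Type) n m (u : 'I_n -> X) (v : 'I_m -> X) i :
  ord_cat u v (lshift m i) = u i.
Proof. by rewrite /ord_cat (unsplitK (inl _ i)). Qed.

Lemma ord_cat_rshift (X : Type) n m (u : 'I_n -> X) (v : 'I_m -> X) j :
  ord_cat u v (rshift n j) = v j.
Proof. by rewrite /ord_cat (unsplitK (inr _ j)). Qed.

Lemma ord_catP (X : Type) (Q : X -> Prop) n m (u : 'I_n -> X) (v : 'I_m -> X) :
  (forall i, Q (u i)) -> (forall j, Q (v j)) -> forall k, Q (ord_cat u v k).
Proof. by move=> Qu Qv k; rewrite /ord_cat; case: fintype.split. Qed.

Section factorization.
Context {R : realType} {d1 d2 : measure_display} {Om : measurableType d1}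
  {Dl : measurableType d2} (mu : {measure set Om -> \bar R})
  (nu : {measure set Dl -> \bar R}) (X1 X2 : fspace R Om) (Y1 Y2 : fspace R Dl)
  (T S : (Om -> R) -> (Dl -> R)) (h : Om -> R).
Hypotheses (bY1 : is_bfs nu Y1) (bY2 : is_bfs nu Y2).
Hypotheses (Y1_n0 : exists g, fs_mem Y1 g) (Y2_n0 : exists g, fs_mem Y2 g).
Hypotheses (cT : is_clop mu nu X1 Y1 T) (cS : is_clop mu nu X2 Y2 S).
Hypothesis hX : fs_mem (ydual X1 X2) h.

Local Notation K := (kdual nu Y1).
Local Notation pin := (pi_norm nu Y2 K).
Local Notation P := (fs_mem (piprod nu Y2 K)).

Let K_norm_ge0 g (_ : fs_mem K g) : (0 <= fs_norm K g)%E := kdual_norm_ge0 bY1 Y1_n0 g.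
Let K_n0 : exists g, fs_mem K g. Proof. by exists (fun _ => 0); exact: kdual0. Qed.
Let P0 : P (fun _ => 0) := piprod0 bY2 Y2_n0 K_norm_ge0 K_n0.
Let P_comb a b f g : P f -> P g -> P (fun x => a * f x + b * g x) :=
  piprod_comb bY2 Y2_n0 K_norm_ge0 K_n0 a b (f := f) (g := g).
Let P_fin f : P f -> pin f \is a fin_num := piprod_norm_fin bY2 K_norm_ge0 (h := f).

Definition tensor_sum n (x : 'I_n -> Om -> R) (y' : 'I_n -> Dl -> R) : Dl -> R :=
  fun t => \sum_(i < n) S (fun s => h s * x i s) t * y' i t.

Definition pairing_sum n (x : 'I_n -> Om -> R) (y' : 'I_n -> Dl -> R) : R :=
  \sum_(i < n) Rintegral nu setT (fun t => T (x i) t * y' i t).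

Lemma tensor_term_piprod x y' : fs_mem X1 x -> fs_mem K y' ->
  P (fun t => S (fun s => h s * x s) t * y' t).
Proof.
move=> X1x Ky'; have [S_Y2 _ _ _] := cS.
have Y2Shx := S_Y2 _ (hX.2 x X1x).
split; first exact: measurable_funM (bfs_measurable bY2 Y2Shx) Ky'.1.
apply: le_lt_trans (pi_norm_mul_le bY2 Y2_n0 K_norm_ge0 Y2Shx Ky') _.
apply: lte_mul_pinfty; first exact: (bfs_norm_ge0 bY2).
  by rewrite ge0_fin_numE; [exact: (bfs_norm_lty bY2)|exact: (bfs_norm_ge0 bY2)].
exact: (kdual_norm_lty bY1 Y1_n0).
Qed.

Lemma pairing_integrable x y' : fs_mem X1 x -> fs_mem K y' ->
  nu.-integrable setT (EFin \o (fun t => T x t * y' t)).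
Proof.
move=> X1x [my' y'_int]; have [T_Y1 _ _ _] := cT.
have [mTy' Ty'_int] := y'_int _ (T_Y1 _ X1x).
apply/integrableP; split.
  by apply/measurable_EFinP; rewrite /=; under eq_fun do rewrite mulrC.
by under eq_integral do rewrite /= mulrC.
Qed.

Lemma tensor_sum_piprod n (x : 'I_n -> Om -> R) (y' : 'I_n -> Dl -> R) :
  (forall i, fs_mem X1 (x i)) -> (forall i, fs_mem K (y' i)) -> P (tensor_sum x y').
Proof. by move=> X1x Ky'; apply: (closed_fun_sum P0 P_comb) => i; exact: tensor_term_piprod. Qed.

Definition tensor_graph : set ((Dl -> R) * R) :=
  [set gr | exists n (x : 'I_n -> Om -> R) (y' : 'I_n -> Dl -> R),
    [/\ forall i, fs_mem X1 (x i), forall i, fs_mem K (y' i) &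
        gr = (tensor_sum x y', pairing_sum x y')]].

Lemma tensor_graph_single x y' : fs_mem X1 x -> fs_mem K y' ->
  tensor_graph (fun t => S (fun s => h s * x s) t * y' t,
                Rintegral nu setT (fun t => T x t * y' t)).
Proof.
move=> X1x Ky'; exists 1%N, (fun _ => x), (fun _ => y'); split => //.
by congr pair; [apply/funext => t|]; rewrite /tensor_sum /pairing_sum big_ord1.
Qed.

Lemma tensor_graph_comb a b gr1 gr2 : tensor_graph gr1 -> tensor_graph gr2 ->
  tensor_graph (fun t => a * gr1.1 t + b * gr2.1 t, a * gr1.2 + b * gr2.2).
Proof.
move=> [n [x [y' [X1x Ky' ->]]]] [m [x2 [y2 [X1x2 Ky2 ->]]]] /=.
exists (n + m)%N, (ord_cat x x2), (ord_cat (fun i t => a * y' i t) (fun j t => b * y2 j t)).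
split; [exact: ord_catP|apply: ord_catP => i; exact: kdualZ|congr pair].
  apply/funext => t; rewrite /tensor_sum big_split_ord /= !mulr_sumr.
  by congr (_ + _); apply: eq_bigr => i _; rewrite ?ord_cat_lshift ?ord_cat_rshift mulrCA.
rewrite /pairing_sum big_split_ord /= !mulr_sumr.
by congr (_ + _); apply: eq_bigr => i _; rewrite ?ord_cat_lshift ?ord_cat_rshift;
  rewrite -RintegralZl ?pairing_integrable //; under eq_fun do rewrite mulrCA.
Qed.

Definition pairing_dominated (C : R) : Prop :=
  forall n (x : 'I_n -> Om -> R) (y' : 'I_n -> Dl -> R),
    (forall i, fs_mem X1 (x i)) -> (forall i, fs_mem K (y' i)) ->
    ((pairing_sum x y')%:E <= C%:E * pin (tensor_sum x y'))%E.

Definition Rxi_factorization (xi : (Dl -> R) -> R) : Prop :=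
  dual_elem (piprod nu Y2 K) xi /\
  forall x, fs_mem X1 x -> forall y', fs_mem K y' ->
    eta_map nu (T x) y' = Rxi xi (S (fun s => h s * x s)) y'.

Lemma tensor_graph_dominated C : 0 < C -> pairing_dominated C ->
  dominated_graph P (fun f => C * fine (pin f)) tensor_graph.
Proof.
move=> C_gt0 domC; split.
- by move=> _ [n [x [y' [X1x Ky' ->]]]]; exact: tensor_sum_piprod.
- by move=> a b gr1 gr2 G1 G2; exact: tensor_graph_comb.
- move=> _ [n [x [y' [X1x Ky' ->]]]] /=.
  have := domC n x y' X1x Ky'.
  by rewrite -(fineK (P_fin (tensor_sum_piprod X1x Ky'))) -EFinM lee_fin.
Qed.

Lemma dual_elem_of_le_pi_norm C xi :
  (forall a b f g, P f -> P g -> xi (fun x => a * f x + b * g x) = a * xi f + b * xi g) ->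
  (forall f, P f -> xi f <= C * fine (pin f)) -> dual_elem (piprod nu Y2 K) xi.
Proof.
move=> xi_lin xi_le; split => //; exists C => f Pf /=.
rewrite -(fineK (P_fin Pf)) -EFinM lee_fin ler_norml.
have pin_opp : pin (fun x => -1 * f x + 0 * f x) = pin f.
  apply/eqP; rewrite eq_le !pi_norm_le_ae //; apply: nearW => x;
    by rewrite mul0r addr0 mulN1r normrN.
have := xi_le _ Pf; have := xi_le _ (P_comb (-1) 0 Pf Pf).
by rewrite xi_lin // pin_opp; lra.
Qed.

Lemma Rxi_factorization_of_dominated C : 0 < C -> pairing_dominated C ->
  exists xi, Rxi_factorization xi.
Proof.
move=> C_gt0 domC; pose p f := C * fine (pin f).
have P_add f g : P f -> P g -> P (f + g).
  by move=> Pf Pg; have := P_comb 1 1 Pf Pg; under eq_fun do rewrite !mul1r.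
have p_subadd f g : P f -> P g -> p (f + g) <= p f + p g.
  move=> Pf Pg; rewrite /p -mulrDr ler_pM2l // -fineD ?P_fin //.
  apply: fine_le; rewrite ?fin_numD ?P_fin //; first exact: P_add.
  exact: (pi_normD_le bY2 K_norm_ge0 f g).
have p_homo t f : 0 < t -> P f -> p (t *: f) = t * p f.
  move=> t_gt0 Pf; rewrite /p [pin _](pi_normZ bY2 Y2_n0 K_norm_ge0 K_n0 _ (lt0r_neq0 t_gt0)).
  by rewrite gtr0_norm // fineM ?P_fin // mulrCA.
have G_n0 : tensor_graph !=set0.
  pose x0 (i : 'I_0) : Om -> R := fun _ => 0; pose y0 (i : 'I_0) : Dl -> R := fun _ => 0.
  by exists (tensor_sum x0 y0, pairing_sum x0 y0), 0%N, x0, y0; split => // -[].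
have [xi [xi_lin xi_le xi_ext]] := hahn_banach P_comb p_subadd p_homo
  (tensor_graph_dominated C_gt0 domC) G_n0.
exists xi; split; first exact: dual_elem_of_le_pi_norm xi_lin xi_le.
by move=> x X1x y' Ky'; rewrite /Rxi (xi_ext _ (tensor_graph_single X1x Ky')).
Qed.

Lemma pairing_dominated_of_Rxi_factorization xi : Rxi_factorization xi ->
  exists C, 0 < C /\ pairing_dominated C.
Proof.
move=> [[xi_lin [C xi_bd]] xi_T]; exists (`|C| + 1); split => [|n x y' X1x Ky'].
  by rewrite ltr_pwDr // normr_ge0.
have Pterm i := tensor_term_piprod (X1x i) (Ky' i).
have -> : pairing_sum x y' = xi (tensor_sum x y').
  rewrite /pairing_sum /tensor_sum (linear_fun_sum P0 P_comb xi_lin Pterm).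
  by apply: eq_bigr => i _; exact: xi_T.
have Psum := tensor_sum_piprod X1x Ky'.
apply: le_trans (le_trans _ (xi_bd _ Psum)) _; first by rewrite lee_fin ler_norm.
apply: lee_wpmul2r; first exact: pi_norm_ge0.
by rewrite lee_fin; have := ler_norm C; lra.
Qed.

End factorization.

Unset Implicit Arguments.
Set Strict Implicit.

Theorem theorem3p1 (R : realType) (d1 d2 : measure_display)
  (Om : measurableType d1) (Dl : measurableType d2)
  (mu : {measure set Om -> \bar R}) (nu : {measure set Dl -> \bar R})
  (X1 X2 : fspace R Om) (Y1 Y2 : fspace R Dl)
  (T : (Om -> R) -> (Dl -> R)) (S : (Om -> R) -> (Dl -> R)) (h : Om -> R) :
  sigma_finite setT mu -> sigma_finite setT nu ->
  is_bfs mu X1 -> saturated mu X1 -> is_bfs mu X2 -> saturated mu X2 ->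
  is_bfs nu Y1 -> saturated nu Y1 -> is_bfs nu Y2 -> saturated nu Y2 ->
  is_clop mu nu X1 Y1 T -> nontrivial_op nu X1 T ->
  is_clop mu nu X2 Y2 S -> nontrivial_op nu X2 S ->
  saturated nu (ydual Y2 (kdual nu (kdual nu Y1))) ->
  fs_mem (ydual X1 X2) h ->
  (exists C : R, 0 < C /\
     forall (n : nat) (x : 'I_n -> Om -> R) (y' : 'I_n -> Dl -> R),
       (forall i, fs_mem X1 (x i)) -> (forall i, fs_mem (kdual nu Y1) (y' i)) ->
       ((\sum_(i < n) Rintegral nu setT (fun t => T (x i) t * y' i t))%:E
         <= C%:E * pi_norm nu Y2 (kdual nu Y1)
              (fun t => (\sum_(i < n) S (fun s => h s * x i s) t * y' i t)%R))%E)
  <->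
  (exists xi, dual_elem (piprod nu Y2 (kdual nu Y1)) xi /\
     forall x, fs_mem X1 x ->
       forall y', fs_mem (kdual nu Y1) y' ->
         eta_map nu (T x) y' = Rxi xi (S (fun s => h s * x s)) y').
Proof.
move=> _ _ _ _ _ _ bY1 _ bY2 _ cT [x1 [X1x1 _]] cS [x2 [X2x2 _]] _ hX.
have Y1_n0 : exists g, fs_mem Y1 g by exists (T x1); case: cT => + _ _ _; apply.
have Y2_n0 : exists g, fs_mem Y2 g by exists (S x2); case: cS => + _ _ _; apply.
split => [[C [C_gt0 domC]]|[xi xiP]].
  exact: (Rxi_factorization_of_dominated bY1 bY2 Y1_n0 Y2_n0 cT cS hX C_gt0 domC).
exact: (pairing_dominated_of_Rxi_factorization bY1 bY2 Y1_n0 Y2_n0 cS hX xiP).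
Qed.
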